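(* Let $X$ be a non-empty compact ultrametric space with a finite similarity structure $\mathrm{Sim}_X$ such that there are only finitely many $\mathrm{Sim}_X$-equivalence classes of balls. Then for every $n\in\mathbb N$ the sub-level complex $K_{\le n}$ is locally finite.
   Context: A *ball* in $X$ is a closed metric ball of positive radius. A *finite similarity structure* $\mathrm{Sim}_X$ assigns to each ordered pair of balls $B_1,B_2$ a finite (possibly empty) set $\mathrm{Sim}_X(B_1,B_2)$ of surjective similarities $B_1\to B_2$, closed under identities, inverses, compositions, and restrictions to sub-balls. Balls $A,B$ are *$\mathrm{Sim}_X$-equivalent* if $\mathrm{Sim}_X(A,B)\neq\emptyset$. An embedding $h:B\to X$ ($B$ a ball) is *locally determined by* $\mathrm{Sim}_X$ if every $x\in B$ lies in a ball $B'\subseteq B$ with $h(B')$ a ball and $h|_{B'}\in\mathrm{Sim}_X(B',h(B'))$. Let $\mathcal S$ be the set of pairs $(f,B)$ with $B$ a ball and $f:B\to X$ an embedding locally determined by $\mathrm{Sim}_X$; $(f_1,B_1)\sim(f_2,B_2)$ iff $f_2h=f_1$ for some $h\in\mathrm{Sim}_X(B_1,B_2)$; $[f,B]$ is the class. A *vertex of height $k$* is a set $v=\{[f_1,B_1],\dots,[f_k,B_k]\}$ of $k$ classes with $f_1(B_1),\dots,f_k(B_k)$ pairwise disjoint and with union $X$. If $[f,B]\in v$ and $B$ has more than one point, the *simple expansion of $v$ at $[f,B]$* replaces $[f,B]$ by the classes $[f|_A,A]$, $A$ ranging over the maximal proper sub-balls of $B$; write $u\nearrow v$ if $v$ is a simple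 expansion of $u$. $v\le w$ means there is a chain $v=v_1\nearrow\cdots\nearrow v_n=w$ ($n\ge1$). The *similarity complex* $K$ has these vertices and $n$-simplices the chains $v_0<\dots<v_n$. $K_{\le n}$ is the full subcomplex of $K$ spanned by vertices of height $\le n$. *)

From Stdlib Require Import Reals List Relations.
Import ListNotations.
Open Scope R_scope.

Section SimilarityComplex.

Context {X : Type} (d : X -> X -> R).

Definition ultrametric : Prop :=
  (forall x y, 0 <= d x y) /\
  (forall x y, d x y = 0 <-> x = y) /\
  (forall x y, d x y = d y x) /\
  (forall x y z, d x z <= Rmax (d x y) (d y z)).

(** Compactness (sequential compactness; equivalent for metric spaces). *)
Definition seq_compact : Prop :=
  forall u : nat -> X, exists (phi : nat -> nat) (l : X),
    (forall i j, (i < j)%nat -> (phi i < phi j)%nat) /\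
    (forall eps, eps > 0 -> exists N, forall k, (N <= k)%nat -> d (u (phi k)) l < eps).

Definition subset (A B : X -> Prop) : Prop := forall x, A x -> B x.
Definition image (f : X -> X) (A : X -> Prop) : X -> Prop :=
  fun y => exists x, A x /\ f x = y.
Definition agree (B : X -> Prop) (f g : X -> X) : Prop := forall x, B x -> f x = g x.

Definition is_ball (B : X -> Prop) : Prop :=
  exists x r, r > 0 /\ forall y, B y <-> d x y <= r.

Definition surj_similarity (B1 B2 : X -> Prop) (f : X -> X) : Prop :=
  (forall x, B1 x -> B2 (f x)) /\
  (forall y, B2 y -> exists x, B1 x /\ f x = y) /\
  (exists lam, lam > 0 /\ forall x y, B1 x -> B1 y -> d (f x) (f y) = lam * d x y).

Variable Sim : (X -> Prop) -> (X -> Prop) -> (X -> X) -> Prop.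

(** Finite similarity structure.  [Sim B1 B2 f] means that the map
    [x |-> f x] on [B1] belongs to Sim_X(B1,B2); maps are identified
    when they agree on [B1]. *)
Definition finite_similarity_structure : Prop :=
  (forall B1 B2 f, Sim B1 B2 f -> is_ball B1 /\ is_ball B2 /\ surj_similarity B1 B2 f) /\
  (forall B1 B2 f g, Sim B1 B2 f -> agree B1 f g -> Sim B1 B2 g) /\
  (forall B1 B2, exists L : list (X -> X),
      forall f, Sim B1 B2 f -> exists g, In g L /\ agree B1 f g) /\
  (forall B, is_ball B -> Sim B B (fun x => x)) /\
  (forall B1 B2 f, Sim B1 B2 f -> exists g, Sim B2 B1 g /\
      (forall x, B1 x -> g (f x) = x) /\ (forall y, B2 y -> f (g y) = y)) /\
  (forall B1 B2 B3 f g, Sim B1 B2 f -> Sim B2 B3 g -> Sim B1 B3 (fun x => g (f x))) /\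
  (forall B1 B2 f B', Sim B1 B2 f -> is_ball B' -> subset B' B1 ->
      Sim B' (image f B') f).

Definition sim_equivalent (A B : X -> Prop) : Prop := exists f, Sim A B f.

Definition finitely_many_ball_classes : Prop :=
  exists Bs : list (X -> Prop), forall B, is_ball B ->
    exists B0, In B0 Bs /\ sim_equivalent B B0.

Definition embedding (B : X -> Prop) (f : X -> X) : Prop :=
  (forall x y, B x -> B y -> f x = f y -> x = y) /\
  (forall x, B x -> forall eps, eps > 0 -> exists del, del > 0 /\
      forall y, B y -> d x y < del -> d (f x) (f y) < eps) /\
  (forall x, B x -> forall eps, eps > 0 -> exists del, del > 0 /\
      forall y, B y -> d (f x) (f y) < del -> d x y < eps).

Definition locally_determined (B : X -> Prop) (h : X -> X) : Prop :=
  forall x, B x -> exists B', is_ball B' /\ subset B' B /\ B' x /\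
     is_ball (image h B') /\ Sim B' (image h B') h.

Definition Pair : Type := ((X -> X) * (X -> Prop))%type.

Definition inS (p : Pair) : Prop :=
  is_ball (snd p) /\ embedding (snd p) (fst p) /\ locally_determined (snd p) (fst p).

Definition pair_equiv (p q : Pair) : Prop :=
  exists h, Sim (snd p) (snd q) h /\ forall x, snd p x -> fst q (h x) = fst p x.

Definition Cls : Type := Pair -> Prop.

Definition cls (p : Pair) : Cls := fun q => inS q /\ pair_equiv q p.

Definition Vtx : Type := Cls -> Prop.

Definition pair0 : Pair := (fun x => x, fun _ => False).

Definition vertex_height (v : Vtx) (k : nat) : Prop :=
  exists ps : list Pair,
    length ps = k /\
    (forall p, In p ps -> inS p) /\
    (forall c, v c <-> exists p, In p ps /\ c = cls p) /\
    (forall i j, (i < k)%nat -> (j < k)%nat -> i <> j -> forall y,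
        ~ (image (fst (nth i ps pair0)) (snd (nth i ps pair0)) y /\
           image (fst (nth j ps pair0)) (snd (nth j ps pair0)) y)) /\
    (forall y, exists p, In p ps /\ image (fst p) (snd p) y).

Definition is_vertex (v : Vtx) : Prop := exists k, vertex_height v k.

Definition max_proper_subball (B A : X -> Prop) : Prop :=
  is_ball A /\ subset A B /\ ~ subset B A /\
  forall A', is_ball A' -> subset A A' -> subset A' B -> ~ subset B A' -> subset A' A.

Definition simple_expansion (u v : Vtx) : Prop :=
  is_vertex u /\ is_vertex v /\
  exists (f : X -> X) (B : X -> Prop),
    u (cls (f, B)) /\
    (exists x y, B x /\ B y /\ x <> y) /\
    forall c, v c <-> ((u c /\ c <> cls (f, B)) \/
                       exists A, max_proper_subball B A /\ c = cls (f, A)).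

Definition vle (v w : Vtx) : Prop := clos_refl_trans_1n Vtx simple_expansion v w.
Definition vlt (v w : Vtx) : Prop := vle v w /\ v <> w.

Fixpoint strict_chain (s : list Vtx) : Prop :=
  match s with
  | [] => True
  | v :: s' => match s' with
               | [] => True
               | w :: _ => vlt v w /\ strict_chain s'
               end
  end.

Definition simplex_K_le (n : nat) (s : list Vtx) : Prop :=
  s <> [] /\
  (forall v, In v s -> exists k, vertex_height v k /\ (k <= n)%nat) /\
  strict_chain s.

Definition K_le_locally_finite (n : nat) : Prop :=
  forall v, (exists k, vertex_height v k /\ (k <= n)%nat) ->
    exists LL : list (list Vtx),
      forall s, simplex_K_le n s -> In v s -> In s LL.

End SimilarityComplex.

From Stdlib Require Import Reals List Relations Lra Lia.
From Stdlib Require Import Classical ClassicalEpsilon FunctionalExtensionality PropExtensionality.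
Import ListNotations.
Open Scope R_scope.

(** A simplex of K_{<=n} through a vertex [v] of height [k] is a chain of
    pairwise comparable vertices, hence a duplicate-free list of vertices that
    lie either below [v] or above [v] with height at most [n <= k + n].  It
    therefore suffices to show that both sets are finite.

    - Geometry: in a compact ultrametric space a ball with two points has a
      diameter [M] and a next scale [del]; its maximal proper sub-balls are
      the [del]-balls around its points: finitely many, covering it, and at
      least two of them disjoint.
    - A simple expansion replaces one class by at least two new ones, so it
      raises the height; vertices are determined by finitely many classes.
    - Successors of a vertex are finitely many (new classes come from
      maximal sub-balls); predecessors are finitely many because the
      contracted ball can be moved onto one of finitely many representative
      balls, where Sim_X is finite. *)

Lemma pred_ext {T : Type} (A B : T -> Prop) : (forall x, A x <-> B x) -> A = B.
Proof.
  intros H; apply functional_extensionality; intros x.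
  apply propositional_extensionality; auto.
Qed.

Fixpoint greedy_points {T : Type} (next : list T -> T) (k : nat) : list T :=
  match k with
  | O => []
  | S k => next (greedy_points next k) :: greedy_points next k
  end.

Lemma greedy_points_in {T : Type} (next : list T -> T) i k :
  (i < k)%nat -> In (next (greedy_points next i)) (greedy_points next k).
Proof.
  induction k as [|k IH]; intros H; [lia|]. simpl.
  destruct (Nat.eq_dec i k) as [->|Hne]; [now left|]. right; apply IH; lia.
Qed.

Lemma list_max_with (l : list R) (P : R -> Prop) :
  (exists t, In t l /\ P t) ->
  exists m, In m l /\ P m /\ forall t, In t l -> P t -> t <= m.
Proof.
  induction l as [|a l IH]; intros [t [Ht Pt]]; [destruct Ht|].
  destruct (classic (exists t, In t l /\ P t)) as [Hex|Hno].
  - destruct (IH Hex) as [m [Hm [Pm Hmax]]].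
    destruct (classic (P a /\ m < a)) as [[Pa Hlt]|Hn].
    + exists a; repeat split; [now left|auto|].
      intros t' [Ea|Ht'] Pt'; [subst; lra|]. specialize (Hmax t' Ht' Pt'); lra.
    + exists m; repeat split; [now right|auto|].
      intros t' [Ea|Ht'] Pt'; auto. subst a.
      destruct (Rle_or_lt t' m); auto. exfalso; apply Hn; auto.
  - destruct Ht as [<-|Ht]; [|exfalso; apply Hno; eauto].
    exists a; repeat split; [now left|auto|].
    intros t' [Ea|Ht'] Pt'; [subst; lra|]. exfalso; apply Hno; eauto.
Qed.

Lemma short_lists_finite {T : Type} (F : list T) k :
  exists LL, forall s, (length s <= k)%nat -> incl s F -> In s LL.
Proof.
  induction k as [|k [LL IH]].
  - exists [[]]. intros [|a s] Hl _; [now left|simpl in Hl; lia].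
  - exists ([] :: flat_map (fun a => map (cons a) LL) F).
    intros [|a s] Hl Hi; [now left|right].
    apply in_flat_map. exists a. split; [apply Hi; now left|].
    apply in_map, IH; [simpl in Hl; lia|]. intros y Hy; apply Hi; now right.
Qed.

Lemma nodup_lists_finite {T : Type} (F : list T) :
  exists LL, forall s, NoDup s -> incl s F -> In s LL.
Proof.
  destruct (short_lists_finite F (length F)) as [LL H]. exists LL.
  intros s Hn Hi. apply H; auto. apply NoDup_incl_length; auto.
Qed.

Lemma finite_union {A T : Type} (l : list A) (P : A -> T -> Prop) :
  (forall a, In a l -> exists L, forall t, P a t -> In t L) ->
  exists L, forall a t, In a l -> P a t -> In t L.
Proof.
  induction l as [|a l IH]; intros H; [exists []; intros ? ? []|].
  destruct (H a (or_introl eq_refl)) as [La HLa].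
  destruct IH as [L HL]; [intros; apply H; now right|].
  exists (La ++ L). intros a' t [<-|Ha'] Ht; apply in_or_app; [left|right]; eauto.
Qed.

Definition prop_eq_dec {T : Type} (x y : T) : {x = y} + {x <> y} :=
  excluded_middle_informative (x = y).

Lemma NoDup_remove_dec {T : Type} (dec : forall x y : T, {x = y} + {x <> y}) l x :
  NoDup l -> NoDup (remove dec x l).
Proof.
  induction l as [|a l IH]; intros H; simpl; [constructor|].
  inversion H; subst. destruct (dec x a); auto. constructor; auto.
  intros Hin. apply in_remove in Hin. tauto.
Qed.

Section Ultrametric.

Context {X : Type} (d : X -> X -> R).
Hypothesis UM : ultrametric d.

Lemma d_nonneg x y : 0 <= d x y. Proof. apply UM. Qed.
Lemma d_self x : d x x = 0. Proof. apply UM; auto. Qed.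
Lemma d_zero_eq x y : d x y = 0 -> x = y. Proof. apply UM. Qed.
Lemma d_sym x y : d x y = d y x. Proof. apply UM. Qed.
Lemma d_ultra x y z : d x z <= Rmax (d x y) (d y z). Proof. apply UM. Qed.

Lemma ultra_le x y z r : d x y <= r -> d y z <= r -> d x z <= r.
Proof.
  intros; eapply Rle_trans; [apply (d_ultra x y z)|]. apply Rmax_lub; auto.
Qed.

Lemma ultra_lt x y z r : d x y < r -> d y z < r -> d x z < r.
Proof.
  intros; eapply Rle_lt_trans; [apply (d_ultra x y z)|]. apply Rmax_lub_lt; auto.
Qed.

Lemma ultra_isosceles x y z : d x y < d x z -> d y z = d x z.
Proof.
  intros H. pose proof (proj2 (proj2 (proj2 UM)) y x z) as H1.
  pose proof (proj2 (proj2 (proj2 UM)) x y z) as H2.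
  rewrite (d_sym y x) in H1. unfold Rmax in *.
  destruct (Rle_dec (d x y) (d x z)); [|lra].
  destruct (Rle_dec (d x y) (d y z)); lra.
Qed.

Definition cball (x : X) (r : R) : X -> Prop := fun y => d x y <= r.

Lemma cball_center x r : 0 <= r -> cball x r x.
Proof. intros; unfold cball; rewrite d_self; lra. Qed.

Lemma cball_is_ball x r : r > 0 -> is_ball d (cball x r).
Proof. intros Hr. exists x, r; split; [lra|]. unfold cball; tauto. Qed.

Lemma cball_recentre c n r : d c n <= r -> cball c r = cball n r.
Proof.
  intros Hcn. apply pred_ext; intros y; unfold cball; split; intros Hy.
  - apply ultra_le with c; [rewrite d_sym|]; lra.
  - apply ultra_le with n; lra.
Qed.

Hypothesis SC : seq_compact d.

(** Sequential compactness implies total boundedness: otherwise a greedy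
    sequence of [eps]-separated points would have no convergent subsequence. *)
Lemma totally_bounded eps : eps > 0 -> exists N : list X, forall x, exists n, In n N /\ d x n < eps.
Proof.
  intros Heps. apply NNPP; intros H.
  assert (Hfar : forall N : list X, {x : X | forall n, In n N -> eps <= d x n}).
  { intros N. apply constructive_indefinite_description.
    apply not_all_not_ex; intros Hall. apply H. exists N. intros x.
    apply NNPP; intros Hx. apply (Hall x). intros n Hin.
    destruct (Rle_or_lt eps (d x n)); auto. exfalso; apply Hx; eauto. }
  set (next := fun N => proj1_sig (Hfar N)).
  destruct (SC (fun k => next (greedy_points next k))) as [phi [l [Hphi Hcv]]].
  destruct (Hcv (eps/2)) as [N HN]; [lra|].
  pose proof (greedy_points_in next _ _ (Hphi N (S N) (Nat.lt_succ_diag_r N))) as Hin.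
  pose proof (proj2_sig (Hfar (greedy_points next (phi (S N)))) _ Hin) as Hsep.
  pose proof (HN (S N) (Nat.le_succ_diag_r N)) as H1.
  pose proof (HN N (Nat.le_refl N)) as H2.
  assert (d (next (greedy_points next (phi (S N)))) (next (greedy_points next (phi N))) < eps)
    by (apply ultra_lt with l; [|rewrite d_sym]; lra).
  unfold next in *; lra.
Qed.

Definition distance_in (B : X -> Prop) (t : R) : Prop := exists a b, B a /\ B b /\ d a b = t.

(** Only finitely many distances [>= eps] occur: each of them is a distance
    between two points of an [eps]-net, by the isosceles property. *)
Lemma large_distances_finite (B : X -> Prop) eps : eps > 0 ->
  exists Dl : list R, forall a b, B a -> B b -> eps <= d a b -> In (d a b) Dl.
Proof.
  intros He. destruct (totally_bounded eps He) as [N HN].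
  exists (flat_map (fun n => map (d n) N) N).
  intros a b Ha Hb Hab.
  destruct (HN a) as [na [Hna Hda]]. destruct (HN b) as [nb [Hnb Hdb]].
  apply in_flat_map; exists na; split; auto. apply in_map_iff; exists nb; split; auto.
  assert (E1 : d na b = d a b) by (apply ultra_isosceles; lra).
  assert (E2 : d nb na = d b na) by (apply ultra_isosceles; rewrite (d_sym b na), E1; lra).
  rewrite (d_sym na nb), E2, (d_sym b na), E1; auto.
Qed.

Lemma largest_distance (B : X -> Prop) (Q : R -> Prop) t0 :
  t0 > 0 -> distance_in B t0 -> Q t0 ->
  exists m, distance_in B m /\ Q m /\ t0 <= m /\
    forall t, distance_in B t -> Q t -> t0 <= t -> t <= m.
Proof.
  intros Ht0 HD HQ. destruct (large_distances_finite B t0 Ht0) as [Dl HDl].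
  assert (Hin : forall t, distance_in B t -> t0 <= t -> In t Dl)
    by (intros t [a [b [Ha [Hb <-]]]] Ht; apply HDl; auto).
  destruct (list_max_with Dl (fun t => distance_in B t /\ Q t /\ t0 <= t))
    as [m [_ [[Dm [Qm Lm]] Hmax]]].
  - exists t0. assert (t0 <= t0) by lra. repeat split; auto.
  - exists m; repeat split; auto.
Qed.

(** The two top scales of a set [B]: its diameter [M], attained from every
    point, and the next smaller scale [del] (no distance lies in [(del, M)]). *)
Definition ball_scales (B : X -> Prop) (M del : R) : Prop :=
  0 < del < M /\
  (forall a b, B a -> B b -> d a b <= M) /\
  (forall a b, B a -> B b -> del < d a b -> M <= d a b) /\
  (forall x, B x -> exists z, B z /\ M <= d x z).

Lemma scales_exist (B : X -> Prop) : (exists x y, B x /\ B y /\ x <> y) ->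
  exists M del, ball_scales B M del.
Proof.
  intros [x0 [y0 [Hx0 [Hy0 Hne]]]].
  assert (Ht0 : d x0 y0 > 0).
  { destruct (d_nonneg x0 y0) as [H|H]; [lra|]. exfalso; apply Hne, d_zero_eq; auto. }
  destruct (largest_distance B (fun _ => True) (d x0 y0) Ht0) as [M [DM [_ [LM HM]]]];
    [exists x0, y0; auto|exact I|].
  assert (Hdiam : forall a b, B a -> B b -> d a b <= M).
  { intros a b Ha Hb. destruct (Rle_or_lt (d x0 y0) (d a b)); [|lra].
    apply HM; auto. exists a, b; auto. }
  assert (Hgap : exists del, 0 < del < M /\
            forall a b, B a -> B b -> del < d a b -> M <= d a b).
  { destruct (classic (exists t, distance_in B t /\ 0 < t < M)) as [[t1 [Dt1 Ht1]]|Hno].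
    - destruct (largest_distance B (fun t => t < M) t1 (proj1 Ht1) Dt1 (proj2 Ht1))
        as [m [_ [Qm [Lm Hm]]]].
      exists m; split; [lra|]. intros a b Ha Hb Hlt.
      destruct (Rle_or_lt M (d a b)) as [|Hl]; auto.
      assert (d a b <= m) by (apply Hm; auto; [exists a, b; auto|lra]). lra.
    - exists (M/2); split; [lra|]. intros a b Ha Hb Hlt.
      destruct (Rle_or_lt M (d a b)) as [|Hl]; auto. exfalso; apply Hno.
      exists (d a b); split; [exists a, b; auto|lra]. }
  destruct Hgap as [del [Hdel Hgap]]. exists M, del; repeat split; auto; try lra.
  intros x Hx. destruct DM as [a [b [Ha [Hb E]]]].
  pose proof (proj2 (proj2 (proj2 UM)) a x b) as H. rewrite E in H. unfold Rmax in H.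
  destruct (Rle_dec (d a x) (d x b)).
  - exists b; split; auto; lra.
  - exists a; split; auto; rewrite d_sym; lra.
Qed.

Section MaximalSubballs.

Variables (B : X -> Prop) (M del : R).
Hypothesis HB : is_ball d B.
Hypothesis HS : ball_scales B M del.

Lemma ball_with_far_pair_contains A x y : is_ball d A -> A x -> A y ->
  B x -> B y -> M <= d x y -> subset B A.
Proof.
  intros [c [r [Hr HA]]] Ax Ay Bx By Hxy z Bz. destruct HS as [_ [Hdiam _]].
  apply HA in Ax. apply HA in Ay. apply HA. apply ultra_le with x; auto.
  apply Rle_trans with M; [apply Hdiam; auto|].
  apply Rle_trans with (d x y); auto. apply ultra_le with c; auto. rewrite d_sym; auto.
Qed.

Lemma scale_ball_subset x : B x -> subset (cball x del) B.
Proof.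
  destruct HB as [c [r [Hr HBc]]]. destruct HS as [Hdel [_ [_ Hfar]]].
  intros Hx y Hy. destruct (Hfar x Hx) as [z [Hz Hxz]].
  assert (Hxz' : d x z <= r) by (apply ultra_le with c; [rewrite d_sym|]; apply HBc; auto).
  apply HBc. apply ultra_le with x; [apply HBc; auto|]. unfold cball in Hy; lra.
Qed.

Lemma scale_ball_maximal x : B x -> max_proper_subball d B (cball x del).
Proof.
  intros Hx. destruct HS as [Hdel [_ [_ Hfar]]].
  split; [apply cball_is_ball; lra|]. split; [apply scale_ball_subset; auto|]. split.
  - intros Hs. destruct (Hfar x Hx) as [z [Hz Hxz]].
    specialize (Hs z Hz). unfold cball in Hs; lra.
  - intros A' HA' Hsub1 Hsub2 Hnot y Hy. unfold cball.
    destruct (Rle_or_lt (d x y) del) as [|Hlt]; auto. exfalso. apply Hnot.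
    apply (ball_with_far_pair_contains A' x y); auto.
    + apply Hsub1, cball_center; lra.
    + destruct HS as [_ [_ [Hgap _]]]. apply Hgap; auto.
Qed.

Lemma maximal_subball_is_scale_ball A : max_proper_subball d B A ->
  exists c, B c /\ A = cball c del.
Proof.
  intros [HA [HAB [HnA Hmax]]]. pose proof HA as [c [r [Hr HAc]]].
  assert (Ac : A c) by (apply HAc; rewrite d_self; lra).
  assert (Sub1 : subset A (cball c del)).
  { intros y Hy. unfold cball. destruct (Rle_or_lt (d c y) del) as [|Hlt]; auto.
    exfalso; apply HnA. apply (ball_with_far_pair_contains A c y); auto.
    destruct HS as [_ [_ [Hgap _]]]. apply Hgap; auto. }
  exists c; split; auto. apply pred_ext; intros y; split; [apply Sub1|].
  pose proof (scale_ball_maximal c (HAB c Ac)) as [Hb [HsB [HnB _]]].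
  apply Hmax; auto.
Qed.

Lemma scale_balls_disjoint : exists x z, B x /\ B z /\
  forall y, ~ (cball x del y /\ cball z del y).
Proof.
  pose proof HB as [c [r [Hr HBc]]]. destruct HS as [Hdel [_ [_ Hfar]]].
  assert (Bc : B c) by (apply HBc; rewrite d_self; lra).
  destruct (Hfar c Bc) as [z [Hz Hcz]]. exists c, z; repeat split; auto.
  intros y [H1 H2]. unfold cball in *.
  assert (d c z <= del) by (apply ultra_le with y; auto; rewrite d_sym; auto). lra.
Qed.

End MaximalSubballs.

(** A ball has only finitely many maximal proper sub-balls: they are
    [del]-balls, and each is centred at a point of a finite [del]-net. *)
Lemma maximal_subballs_finite B : is_ball d B ->
  exists LA, forall A, max_proper_subball d B A -> In A LA.
Proof.
  intros HB. destruct (classic (exists x y, B x /\ B y /\ x <> y)) as [H2|H1].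
  - destruct (scales_exist B H2) as [M [del HS]].
    destruct (totally_bounded del) as [N HN]; [apply HS|].
    exists (map (fun n => cball n del) N). intros A HA.
    destruct (maximal_subball_is_scale_ball B M del HB HS A HA) as [c [_ ->]].
    destruct (HN c) as [n [Hn Hcn]].
    apply in_map_iff; exists n; split; auto. symmetry; apply cball_recentre; lra.
  - exists []. intros A [[c [r [Hr HA]]] [HAB [HnA _]]]. exfalso.
    apply HnA. intros y Hy. assert (Ac : A c) by (apply HA; rewrite d_self; lra).
    destruct (classic (y = c)) as [->|Hne]; auto.
    exfalso; apply H1. exists y, c; auto.
Qed.

Lemma maximal_subballs_cover B : is_ball d B -> (exists x y, B x /\ B y /\ x <> y) ->
  exists LA, (forall A, In A LA -> max_proper_subball d B A) /\
     forall x, B x -> exists A, In A LA /\ A x.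
Proof.
  intros HB H2. destruct (maximal_subballs_finite B HB) as [LA HLA].
  destruct (scales_exist B H2) as [M [del HS]].
  exists (filter (fun A => if excluded_middle_informative (max_proper_subball d B A)
                           then true else false) LA).
  split.
  - intros A HA. apply filter_In in HA. destruct HA as [_ H].
    destruct (excluded_middle_informative _); auto; discriminate.
  - intros x Hx. pose proof (scale_ball_maximal B M del HB HS x Hx) as Hm.
    exists (cball x del). split; [|apply cball_center; destruct HS; lra].
    apply filter_In; split; auto. destruct (excluded_middle_informative _); auto.
Qed.

Lemma two_disjoint_maximal_subballs B : is_ball d B -> (exists x y, B x /\ B y /\ x <> y) ->
  exists A1 A2 x1 x2, max_proper_subball d B A1 /\ max_proper_subball d B A2 /\
    A1 x1 /\ A2 x2 /\ forall y, ~ (A1 y /\ A2 y).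
Proof.
  intros HB H2. destruct (scales_exist B H2) as [M [del HS]].
  destruct (scale_balls_disjoint B M del HB HS) as [x [z [Bx [Bz Hdisj]]]].
  exists (cball x del), (cball z del), x, z.
  repeat split; try apply (scale_ball_maximal B M del); auto;
    apply cball_center; destruct HS; lra.
Qed.

End Ultrametric.

Section Similarities.

Context {X : Type} (d : X -> X -> R) (Sim : (X -> Prop) -> (X -> Prop) -> (X -> X) -> Prop).
Hypothesis UM : ultrametric d.
Hypothesis FS : finite_similarity_structure d Sim.

Lemma sim_props B1 B2 f : Sim B1 B2 f ->
  is_ball d B1 /\ is_ball d B2 /\ surj_similarity d B1 B2 f.
Proof. apply FS. Qed.
Lemma sim_balls B1 B2 f : Sim B1 B2 f -> is_ball d B1 /\ is_ball d B2.
Proof. intros H. apply sim_props in H. tauto. Qed.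
Lemma sim_finite B1 B2 :
  exists L : list (X -> X), forall f, Sim B1 B2 f -> exists g, In g L /\ agree B1 f g.
Proof. apply FS. Qed.
Lemma sim_id B : is_ball d B -> Sim B B (fun x => x).
Proof. apply FS. Qed.
Lemma sim_inverse B1 B2 f : Sim B1 B2 f -> exists g, Sim B2 B1 g /\
  (forall x, B1 x -> g (f x) = x) /\ (forall y, B2 y -> f (g y) = y).
Proof. apply FS. Qed.
Lemma sim_comp B1 B2 B3 f g : Sim B1 B2 f -> Sim B2 B3 g -> Sim B1 B3 (fun x => g (f x)).
Proof. apply FS. Qed.
Lemma sim_restrict B1 B2 f B' : Sim B1 B2 f -> is_ball d B' -> subset B' B1 ->
  Sim B' (image f B') f.
Proof. apply FS. Qed.

Lemma sim_maps B1 B2 f x : Sim B1 B2 f -> B1 x -> B2 (f x).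
Proof. intros H Hx. apply sim_props in H. apply H; auto. Qed.
Lemma sim_surj B1 B2 f y : Sim B1 B2 f -> B2 y -> exists x, B1 x /\ f x = y.
Proof. intros H Hy. apply sim_props in H. apply H; auto. Qed.

Lemma sim_inj B1 B2 f x y : Sim B1 B2 f -> B1 x -> B1 y -> f x = f y -> x = y.
Proof.
  intros H Hx Hy E. apply sim_props in H. destruct H as [_ [_ [_ [_ [lam [Hl Hd]]]]]].
  specialize (Hd x y Hx Hy). rewrite E, (d_self d UM) in Hd.
  apply (d_zero_eq d UM). destruct (Rmult_integral lam (d x y)); lra.
Qed.

Lemma ball_nonempty B : is_ball d B -> exists x, B x.
Proof. intros [c [r [Hr H]]]. exists c. apply H. rewrite (d_self d UM). lra. Qed.

Notation cl := (cls d Sim).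

Definition pair_image (p : Pair) : X -> Prop := image (fst p) (snd p).

Lemma class_self p : inS d Sim p -> cl p p.
Proof. intros Hp. split; auto. exists (fun x => x). split; auto. apply sim_id, Hp. Qed.

Lemma pair_equiv_image q p : pair_equiv Sim q p ->
  forall y, pair_image q y <-> pair_image p y.
Proof.
  intros [h [Hh E]] y. unfold pair_image, image; split.
  - intros [x [Hx <-]]. exists (h x). split; [eapply sim_maps; eauto|]. apply E; auto.
  - intros [x [Hx <-]]. destruct (sim_surj _ _ _ x Hh Hx) as [x' [Hx' <-]].
    exists x'; split; auto. rewrite E; auto.
Qed.

Lemma class_eq_image p q : inS d Sim q -> cl p = cl q ->
  forall y, pair_image q y <-> pair_image p y.
Proof.
  intros Hq E. assert (H : cl p q) by (rewrite E; apply class_self; auto).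
  apply pair_equiv_image, H.
Qed.

Lemma pair_image_nonempty p : inS d Sim p -> exists y, pair_image p y.
Proof.
  intros Hp. destruct (ball_nonempty _ (proj1 Hp)) as [x Hx]. exists (fst p x), x; auto.
Qed.

Lemma class_representative f B p : inS d Sim p -> cl (f, B) = cl p ->
  exists g, Sim B (snd p) g /\ forall x, B x -> f x = fst p (g x).
Proof.
  intros Hp E. assert (H : cl (f, B) p) by (rewrite E; apply class_self; auto).
  destruct H as [_ [h [Hh Eh]]]. simpl in Hh, Eh.
  destruct (sim_inverse _ _ _ Hh) as [g [Hg [_ Eg]]].
  exists g; split; auto. intros x Hx. rewrite <- (Eg x Hx) at 1. apply Eh.
  eapply sim_maps; eauto.
Qed.

Lemma class_representative_injective f B p : inS d Sim p -> cl (f, B) = cl p ->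
  is_ball d B /\ forall x y, B x -> B y -> f x = f y -> x = y.
Proof.
  intros Hp E. destruct (class_representative f B p Hp E) as [g [Hg Eg]].
  split; [apply (sim_balls _ _ _ Hg)|]. intros x y Hx Hy Exy.
  rewrite !Eg in Exy by auto. destruct Hp as [_ [[Hinj _] _]].
  apply (sim_inj B (snd p) g); auto. apply Hinj; auto; eapply sim_maps; eauto.
Qed.

Lemma class_transport B1 B2 h f1 f2 A : Sim B1 B2 h -> (forall x, B1 x -> f2 (h x) = f1 x) ->
  is_ball d A -> subset A B1 -> cl (f1, A) = cl (f2, image h A).
Proof.
  intros Hh E HA Hsub. pose proof (sim_restrict _ _ _ _ Hh HA Hsub) as HhA.
  apply pred_ext; intros q. unfold cls, pair_equiv; simpl.
  split; intros [Hq [k [Hk Ek]]]; split; auto.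
  - exists (fun x => h (k x)). split; [eapply sim_comp; eauto|].
    intros x Hx. rewrite E; [apply Ek; auto|]. apply Hsub. eapply sim_maps; eauto.
  - destruct (sim_inverse _ _ _ HhA) as [g [Hg [_ Eg]]].
    exists (fun x => g (k x)). split; [eapply sim_comp; eauto|].
    intros x Hx. assert (Hkx : image h A (k x)) by (eapply (sim_maps (snd q)); eauto).
    assert (Hgk : A (g (k x))) by (eapply sim_maps; eauto).
    rewrite <- E by (apply Hsub; auto). rewrite Eg by auto. apply Ek; auto.
Qed.

Lemma sim_image_full B1 B2 h : Sim B1 B2 h -> image h B1 = B2.
Proof.
  intros Hh. apply pred_ext; intros y; split.
  - intros [x [Hx <-]]. eapply sim_maps; eauto.
  - intros Hy. destruct (sim_surj _ _ _ _ Hh Hy) as [x [Hx <-]]. exists x; auto.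
Qed.

Lemma class_transport_full B1 B2 h f1 f2 : Sim B1 B2 h ->
  (forall x, B1 x -> f2 (h x) = f1 x) -> cl (f1, B1) = cl (f2, B2).
Proof.
  intros Hh E. rewrite (class_transport B1 B2 h f1 f2 B1 Hh E), (sim_image_full _ _ _ Hh);
    [auto|apply (sim_balls _ _ _ Hh)|intros x; auto].
Qed.

Lemma class_agree B f g : is_ball d B -> (forall x, B x -> f x = g x) ->
  cl (f, B) = cl (g, B).
Proof.
  intros HB E. apply (class_transport_full B B (fun x => x)); [apply sim_id; auto|].
  intros; symmetry; auto.
Qed.

Lemma maximal_subball_transport B1 B2 h A : Sim B1 B2 h -> max_proper_subball d B1 A ->
  max_proper_subball d B2 (image h A).
Proof.
  intros Hh [HA [HAB [HnA Hmax]]].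
  destruct (sim_inverse _ _ _ Hh) as [g [Hg [Eg1 Eg2]]].
  pose proof (sim_restrict _ _ _ _ Hh HA HAB) as HhA.
  split; [apply (sim_balls _ _ _ HhA)|]. split; [|split].
  - intros y [x [Hx <-]]. eapply sim_maps; eauto.
  - intros Hs. apply HnA. intros x Hx.
    destruct (Hs (h x)) as [a [Ha E]]; [eapply sim_maps; eauto|].
    assert (a = x) by (apply (sim_inj B1 B2 h); auto). subst; auto.
  - intros A' HA' Hsub1 Hsub2 Hnot.
    pose proof (sim_restrict _ _ _ _ Hg HA' Hsub2) as HgA.
    assert (S1 : subset (image g A') A).
    { apply Hmax.
      - apply (sim_balls _ _ _ HgA).
      - intros a Ha. exists (h a). split; [apply Hsub1; exists a; auto|]. apply Eg1; auto.
      - intros x [y [Hy <-]]. eapply sim_maps; eauto.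
      - intros Hs. apply Hnot. intros y Hy.
        destruct (Hs (g y)) as [a' [Ha' E]]; [eapply sim_maps; eauto|].
        assert (a' = y) by (eapply (sim_inj B2 B1 g); eauto). subst; auto. }
    intros y Hy. exists (g y). split; [apply S1; exists y; auto|]. apply Eg2; auto.
Qed.

Lemma vertex_classes v k : vertex_height d Sim v k -> exists ps : list Pair,
  length ps = k /\ (forall p, In p ps -> inS d Sim p) /\
  (forall c, v c <-> In c (map cl ps)) /\ NoDup (map cl ps) /\
  (forall p q, In p ps -> In q ps -> cl p <> cl q ->
     forall y, ~ (pair_image p y /\ pair_image q y)).
Proof.
  intros [ps [Hl [HS [Hv [Hdisj Hcov]]]]]. exists ps. do 2 (split; auto). split; [|split].
  - intros c. rewrite Hv, in_map_iff. split; intros [p [H1 H2]]; exists p; auto.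
  - apply (NoDup_nth _ (cl pair0)). intros i j Hi Hj E.
    rewrite length_map in Hi, Hj. rewrite !map_nth in E.
    destruct (Nat.eq_dec i j) as [|Hne]; auto. exfalso.
    assert (Hq : inS d Sim (nth j ps pair0)) by (apply HS, nth_In; lia).
    assert (Hp : inS d Sim (nth i ps pair0)) by (apply HS, nth_In; lia).
    destruct (pair_image_nonempty _ Hp) as [y Hy].
    apply (Hdisj i j) with y; try lia. split; [exact Hy|].
    apply (class_eq_image _ _ Hq E y), Hy.
  - intros p q Hp Hq Hne y [Hy1 Hy2].
    destruct (In_nth _ _ pair0 Hp) as [i [Hi Ei]].
    destruct (In_nth _ _ pair0 Hq) as [j [Hj Ej]].
    destruct (Nat.eq_dec i j) as [->|Hij]; [apply Hne; rewrite <- Ei, <- Ej; auto|].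
    apply (Hdisj i j) with y; try lia. rewrite Ei, Ej. split; auto.
Qed.

(** The classes of a vertex other than [[f, B]] have images disjoint from
    [f(B)], so none of them is the class of [f] on a non-empty part of [B]. *)
Lemma other_classes_avoid_subballs u a f B A z : vertex_height d Sim u a ->
  u (cl (f, B)) -> subset A B -> A z ->
  forall c, u c -> c <> cl (f, B) -> c <> cl (f, A).
Proof.
  intros Ha Hu HAB Az c Hc Hne E.
  destruct (vertex_classes u a Ha) as [pu [_ [Su [Mu [_ Du]]]]].
  apply Mu, in_map_iff in Hu. destruct Hu as [p0 [E0 Hp0]].
  apply Mu, in_map_iff in Hc. destruct Hc as [p [Ep Hp]].
  apply (Du p p0 Hp Hp0 ltac:(congruence) (f z)). split.
  - apply (class_eq_image (f, A) p (Su p Hp)); [congruence|]. exists z; auto.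
  - apply (class_eq_image (f, B) p0 (Su p0 Hp0)); [congruence|].
    exists z; split; [apply HAB; auto|reflexivity].
Qed.

(** Restrictions of an injective map to disjoint non-empty sets have
    different classes, because their images differ. *)
Lemma disjoint_restrictions_distinct f A1 A2 x1 q : inS d Sim q -> cl (f, A1) = cl q ->
  A1 x1 -> (forall y, ~ (A1 y /\ A2 y)) -> (forall y, A2 y -> f y = f x1 -> y = x1) ->
  cl (f, A1) <> cl (f, A2).
Proof.
  intros Hq E1 Hx1 Hdisj Hinj E2.
  assert (I1 : pair_image q (f x1)) by (apply (class_eq_image (f, A1) q Hq E1); exists x1; auto).
  apply (class_eq_image (f, A2) q Hq ltac:(congruence)) in I1.
  destruct I1 as [a [Ha Ea]]. simpl in Ha, Ea.
  rewrite (Hinj a Ha Ea) in Ha. apply (Hdisj x1); auto.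
Qed.

Hypothesis SC : seq_compact d.

(** A simple expansion removes one class [[f, B]] but adds at least two new
    ones ([f] on two disjoint maximal sub-balls): it raises the height. *)
Lemma expansion_raises_height u w a b : simple_expansion d Sim u w ->
  vertex_height d Sim u a -> vertex_height d Sim w b -> (a < b)%nat.
Proof.
  intros [_ [_ [f [B [Hu [H2 Hw]]]]]] Ha Hb.
  destruct (vertex_classes u a Ha) as [pu [Lu [Su [Mu [Nu _]]]]].
  destruct (vertex_classes w b Hb) as [pw [Lw [Sw [Mw [Nw _]]]]].
  pose proof Hu as Hu'. apply Mu, in_map_iff in Hu'. destruct Hu' as [p0 [E0 Hp0]].
  destruct (class_representative_injective f B p0 (Su p0 Hp0) (eq_sym E0)) as [HB finj].
  destruct (two_disjoint_maximal_subballs d UM SC B HB H2)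
    as [A1 [A2 [x1 [x2 [HA1 [HA2 [A1x [A2x Hdisj]]]]]]]].
  assert (W1 : w (cl (f, A1))) by (apply Hw; right; eauto).
  assert (W2 : w (cl (f, A2))) by (apply Hw; right; eauto).
  set (Rest := remove prop_eq_dec (cl (f, B)) (map cl pu)).
  assert (Old : forall A z, max_proper_subball d B A -> A z ->
                  forall c, In c Rest -> c <> cl (f, A)).
  { intros A z [_ [HAB _]] Az c Hc. apply in_remove in Hc. destruct Hc as [Hc Hne].
    apply (other_classes_avoid_subballs u a f B A z); auto. apply Mu; auto. }
  assert (N12 : cl (f, A1) <> cl (f, A2)).
  { apply Mw, in_map_iff in W1. destruct W1 as [q [Eq Hq]].
    apply (disjoint_restrictions_distinct f A1 A2 x1 q); auto.
    intros y Hy E. apply finj; auto; [apply HA2|apply HA1]; auto. }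
  assert (ND : NoDup (cl (f, A1) :: cl (f, A2) :: Rest)).
  { constructor; [|constructor].
    - intros [E|Hin]; [auto|]. apply (Old A1 x1 HA1 A1x _ Hin); auto.
    - intros Hin. apply (Old A2 x2 HA2 A2x _ Hin); auto.
    - apply NoDup_remove_dec; auto. }
  assert (INC : incl (cl (f, A1) :: cl (f, A2) :: Rest) (map cl pw)).
  { intros c [<-|[<-|Hc]]; try (apply Mw; auto).
    apply in_remove in Hc. destruct Hc as [Hc Hne]. apply Hw. left. split; auto.
    apply Mu; auto. }
  pose proof (NoDup_incl_length ND INC) as L1.
  assert (L2 : (length (map cl pu) <= length (cl (f, B) :: Rest))%nat).
  { apply NoDup_incl_length; auto. intros c Hc.
    destruct (prop_eq_dec c (cl (f, B))) as [->|Hne]; [now left|right].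
    apply in_in_remove; auto. }
  simpl in L1, L2. rewrite !length_map in *. lia.
Qed.

Lemma vle_heights u w : vle d Sim u w -> u = w \/
  (is_vertex d Sim u /\ is_vertex d Sim w /\
   forall a b, vertex_height d Sim u a -> vertex_height d Sim w b -> (a < b)%nat).
Proof.
  induction 1 as [x|x y z Hxy Hyz IH]; [now left|right].
  pose proof Hxy as [[a0 Hx] [[c Hy] _]].
  destruct IH as [<-|[_ [Hz Hlt]]].
  - split; [exists a0; auto|split; [exists c; auto|]].
    intros a b Ha Hb. eapply expansion_raises_height; eauto.
  - split; [exists a0; auto|split; auto]. intros a b Ha Hb.
    specialize (Hlt c b Hy Hb). pose proof (expansion_raises_height _ _ _ _ Hxy Ha Hy). lia.
Qed.

Lemma vle_trans u v w : vle d Sim u v -> vle d Sim v w -> vle d Sim u w.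
Proof.
  intros H1 H2. apply clos_rt_rt1n. eapply rt_trans; apply clos_rt1n_rt; eauto.
Qed.

Lemma chain_head s a : strict_chain d Sim (a :: s) ->
  (forall x, In x (a :: s) -> is_vertex d Sim x) ->
  forall b, In b s -> vle d Sim a b /\
    (forall ha hb, vertex_height d Sim a ha -> vertex_height d Sim b hb -> (ha < hb)%nat).
Proof.
  revert a. induction s as [|b0 s IH]; intros a Hc Hv b Hb; [destruct Hb|].
  destruct Hc as [[Hle Hne] Hc].
  destruct (vle_heights _ _ Hle) as [E|[_ [_ Hlt]]]; [contradiction|].
  destruct Hb as [<-|Hb]; [split; auto|].
  destruct (IH b0 Hc (fun x Hx => Hv x (or_intror Hx)) b Hb) as [Hle2 Hlt2].
  split; [eapply vle_trans; eauto|].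
  intros ha hb Ha Hbb. destruct (Hv b0 (or_intror (or_introl eq_refl))) as [c Hc0].
  specialize (Hlt ha c Ha Hc0). specialize (Hlt2 c hb Hc0 Hbb). lia.
Qed.

Lemma strict_chain_tail a s : strict_chain d Sim (a :: s) -> strict_chain d Sim s.
Proof. destruct s; simpl; tauto. Qed.

Lemma chain_nodup s : strict_chain d Sim s ->
  (forall x, In x s -> is_vertex d Sim x) -> NoDup s.
Proof.
  induction s as [|a s IH]; intros Hc Hv; constructor.
  - intros Hin. destruct (chain_head s a Hc Hv a Hin) as [_ Hlt].
    destruct (Hv a (or_introl eq_refl)) as [h Hh]. specialize (Hlt h h Hh Hh). lia.
  - apply IH; [apply (strict_chain_tail a); auto|]. intros x Hx; apply Hv; now right.
Qed.

Lemma chain_comparable s : strict_chain d Sim s ->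
  (forall x, In x s -> is_vertex d Sim x) ->
  forall x y, In x s -> In y s -> vle d Sim x y \/ vle d Sim y x.
Proof.
  induction s as [|a s IH]; intros Hc Hv x y Hx Hy; [destruct Hx|].
  destruct Hx as [<-|Hx]; destruct Hy as [<-|Hy].
  - left; apply rt1n_refl.
  - left; apply (chain_head s a Hc Hv y Hy).
  - right; apply (chain_head s a Hc Hv x Hx).
  - apply IH; auto; [apply (strict_chain_tail a); auto|]. intros; apply Hv; now right.
Qed.

(** A vertex is determined by its set of classes, so only finitely many
    vertices have all their classes in a given finite list. *)
Lemma vertices_within (K : list Cls) : exists LV : list Vtx,
  forall w b, vertex_height d Sim w b -> (forall c, w c -> In c K) -> In w LV.
Proof.
  destruct (nodup_lists_finite K) as [LL HLL]. exists (map (fun s (c : Cls) => In c s) LL).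
  intros w b Hw HK. destruct (vertex_classes w b Hw) as [pw [_ [_ [Mw [Nw _]]]]].
  apply in_map_iff. exists (map cl pw). split.
  - apply pred_ext; intros c; rewrite Mw; tauto.
  - apply HLL; auto. intros c Hc; apply HK, Mw, Hc.
Qed.

(** Every vertex has finitely many simple expansions: the new classes are
    classes of [fst p] on maximal sub-balls of [snd p], for [p] in the vertex,
    after transport along a similarity. *)
Lemma successors_finite v : is_vertex d Sim v ->
  exists L, forall w, simple_expansion d Sim v w -> In w L.
Proof.
  intros [a Ha]. destruct (vertex_classes v a Ha) as [pv [_ [Sv [Mv _]]]].
  destruct (finite_union pv (fun p c => exists A, max_proper_subball d (snd p) A /\
                                                   c = cl (fst p, A))) as [C HC].
  { intros p Hp. destruct (maximal_subballs_finite d UM SC (snd p) (proj1 (Sv p Hp))) as [LA HLA].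
    exists (map (fun A => cl (fst p, A)) LA). intros c [A [HA ->]].
    apply (in_map (fun A => cl (fst p, A))); auto. }
  destruct (vertices_within (map cl pv ++ C)) as [LV HLV].
  exists LV. intros w [_ [[b Hb] [f [B [Hv [_ Hw]]]]]].
  apply (HLV w b Hb). intros c Hc. apply Hw in Hc. apply in_or_app.
  destruct Hc as [[Hc _]|[A [HA ->]]]; [left; apply Mv; auto|right].
  apply Mv, in_map_iff in Hv. destruct Hv as [p [Ep Hp]].
  destruct (class_representative f B p (Sv p Hp) (eq_sym Ep)) as [g [Hg Eg]].
  pose proof HA as [HAb [HAB _]].
  rewrite (class_transport B (snd p) g f (fst p) A Hg); auto.
  - apply (HC p _ Hp). exists (image g A); split; auto.
    apply maximal_subball_transport with B; auto.
  - intros x Hx; symmetry; auto.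
Qed.

Lemma factored_maps_finite (A : X -> Prop) (V : list Pair) : exists O : list (X -> X),
  forall p, In p V -> forall g, Sim A (snd p) g ->
    exists o, In o O /\ forall x, A x -> fst p (g x) = o x.
Proof.
  induction V as [|p V [O IH]]; [exists []; intros p []|].
  destruct (sim_finite A (snd p)) as [L HL].
  exists (map (fun l x => fst p (l x)) L ++ O).
  intros q [<-|Hq] g Hg.
  - destruct (HL g Hg) as [l [Hl Ag]]. exists (fun x => fst p (l x)). split.
    + apply in_or_app; left. apply in_map_iff; exists l; auto.
    + intros x Hx. rewrite Ag; auto.
  - destruct (IH q Hq g Hg) as [o [Ho Eo]]. exists o; split; auto. apply in_or_app; auto.
Qed.

Lemma glued_maps_finite (As : list (X -> Prop)) (V : list Pair) : exists Fs : list (X -> X),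
  forall f', (forall A, In A As -> exists p, In p V /\
                exists g, Sim A (snd p) g /\ forall x, A x -> f' x = fst p (g x)) ->
  exists F, In F Fs /\ forall x, (exists A, In A As /\ A x) -> f' x = F x.
Proof.
  induction As as [|A As [Fs IH]].
  - exists [fun x => x]. intros f' _. exists (fun x => x). split; [now left|].
    intros x [A [[] _]].
  - destruct (factored_maps_finite A V) as [O HO].
    set (glue := fun (o F : X -> X) x => if excluded_middle_informative (A x) then o x else F x).
    exists (flat_map (fun o => map (glue o) Fs) O). intros f' Hf.
    destruct (Hf A (or_introl eq_refl)) as [p [Hp [g [Hg Eg]]]].
    destruct (HO p Hp g Hg) as [o [Ho Eo]].
    destruct (IH f' (fun A' HA' => Hf A' (or_intror HA'))) as [F [HF EF]].
    exists (glue o F). split.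
    + apply in_flat_map. exists o. split; auto. apply in_map; auto.
    + intros x [A0 [HA0 Hx]]. unfold glue.
      destruct (excluded_middle_informative (A x)) as [Ax|nAx].
      * rewrite Eg, Eo; auto.
      * apply EF. destruct HA0 as [<-|HA0]; [contradiction|]. exists A0; auto.
Qed.

(** Given a vertex [w] and a ball [B0], there are finitely many classes
    [[f', B0]] all of whose maximal sub-ball restrictions are classes of [w]:
    the maximal sub-balls cover [B0] and [f'] is glued from finitely many
    pieces. *)
Lemma contracted_classes_finite w b (B0 : X -> Prop) : vertex_height d Sim w b ->
  exists CB : list Cls, forall f', is_ball d B0 -> (exists x y, B0 x /\ B0 y /\ x <> y) ->
    (forall A, max_proper_subball d B0 A -> w (cl (f', A))) -> In (cl (f', B0)) CB.
Proof.
  intros Hw. destruct (vertex_classes w b Hw) as [pw [_ [Sw [Mw _]]]].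
  destruct (classic (is_ball d B0 /\ exists x y, B0 x /\ B0 y /\ x <> y)) as [[HB H2]|Hn];
    [|exists []; intros f' HB H2; exfalso; apply Hn; auto].
  destruct (maximal_subballs_cover d UM SC B0 HB H2) as [LA [HLA Hcov]].
  destruct (glued_maps_finite LA pw) as [Fs HFs].
  exists (map (fun F => cl (F, B0)) Fs). intros f' _ _ Hwf.
  destruct (HFs f') as [F [HF EF]].
  - intros A HA. pose proof (proj1 (Mw _) (Hwf A (HLA A HA))) as Hin.
    apply in_map_iff in Hin. destruct Hin as [p [Ep Hp]]. exists p; split; auto.
    apply (class_representative f' A p (Sw p Hp) (eq_sym Ep)).
  - apply in_map_iff. exists F. split; auto. symmetry. apply class_agree; auto.
Qed.

Lemma above_finite j : forall v a, vertex_height d Sim v a -> exists L, forall w b,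
    vle d Sim v w -> vertex_height d Sim w b -> (b <= a + j)%nat -> In w L.
Proof.
  induction j as [|j IH]; intros v a Ha.
  - exists [v]. intros w b Hvw Hb Hle.
    destruct (vle_heights _ _ Hvw) as [->|[_ [_ Hlt]]]; [now left|].
    specialize (Hlt a b Ha Hb). lia.
  - destruct (successors_finite v (ex_intro _ a Ha)) as [Sc HS].
    destruct (finite_union Sc (fun z w => simple_expansion d Sim v z /\ vle d Sim z w /\
                 exists b, vertex_height d Sim w b /\ (b <= a + S j)%nat)) as [L HL].
    { intros z _. destruct (classic (simple_expansion d Sim v z)) as [He|Hn].
      - pose proof He as [_ [[c Hc] _]].
        pose proof (expansion_raises_height v z a c He Ha Hc).
        destruct (IH z c Hc) as [Lz HLz]. exists Lz.
        intros w [_ [Hzw [b [Hb Hle]]]]. apply (HLz w b); auto; lia.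
      - exists []. intros w [He _]; contradiction. }
    exists (v :: L). intros w b Hvw Hb Hle.
    destruct Hvw as [|z w' Hvz Hzw]; [now left|right].
    apply (HL z); eauto.
Qed.

Hypothesis FB : finitely_many_ball_classes d Sim.

(** The removed
    class [[f, B]] of [u] can be moved, along a similarity, onto one of the
    finitely many representative balls [B0]; there it becomes a class whose
    maximal sub-ball restrictions all lie in [w], and these are finitely many. *)
Lemma predecessors_finite w : is_vertex d Sim w ->
  exists L, forall u, simple_expansion d Sim u w -> In u L.
Proof.
  intros [b Hb]. destruct (vertex_classes w b Hb) as [pw [_ [_ [Mw _]]]].
  destruct FB as [Bs HBs].
  destruct (finite_union Bs (fun B0 c => exists f', is_ball d B0 /\
              (exists x y, B0 x /\ B0 y /\ x <> y) /\
              (forall A, max_proper_subball d B0 A -> w (cl (f', A))) /\ c = cl (f', B0)))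
    as [CC HCC].
  { intros B0 _. destruct (contracted_classes_finite w b B0 Hb) as [CB HCB].
    exists CB. intros c [f' [H1 [H2 [H3 ->]]]]. apply HCB; auto. }
  destruct (vertices_within (map cl pw ++ CC)) as [LV HLV].
  exists LV. intros u [[a Ha] [_ [f [B [Hu [[x [y [Bx [By Hxy]]]] Hw]]]]]].
  apply (HLV u a Ha). intros c Hc. apply in_or_app.
  destruct (prop_eq_dec c (cl (f, B))) as [->|Hne]; [right|left; apply Mw, Hw; left; auto].
  destruct (vertex_classes u a Ha) as [pu [_ [Su [Mu _]]]].
  apply Mu, in_map_iff in Hu. destruct Hu as [p0 [E0 Hp0]].
  destruct (class_representative_injective f B p0 (Su p0 Hp0) (eq_sym E0)) as [HB _].
  destruct (HBs B HB) as [B0 [HB0 [k Hk]]].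
  destruct (sim_inverse _ _ _ Hk) as [ki [Hki [Ek1 Ek2]]].
  set (f' := fun z => f (ki z)).
  assert (Ef' : forall z, B z -> f' (k z) = f z) by (intros z Hz; unfold f'; rewrite Ek1; auto).
  rewrite (class_transport_full B B0 k f f' Hk Ef').
  apply (HCC B0 _ HB0). exists f'. split; [apply (sim_balls _ _ _ Hk)|]. split; [|split; auto].
  - exists (k x), (k y). split; [eapply sim_maps; eauto|]. split; [eapply sim_maps; eauto|].
    intros E. apply Hxy. apply (sim_inj B B0 k); auto.
  - intros A' HA'. pose proof (maximal_subball_transport B0 B ki A' Hki HA') as HA.
    assert (Wc : w (cl (f, image ki A'))) by (apply Hw; right; eauto).
    destruct HA as [HAb [HAB _]].
    rewrite (class_transport B B0 k f f' (image ki A') Hk Ef' HAb HAB) in Wc.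
    replace A' with (image k (image ki A')); auto.
    destruct HA' as [_ [HA'B _]]. apply pred_ext; intros z; split.
    + intros [z1 [[z2 [Hz2 <-]] <-]]. rewrite Ek2; auto.
    + intros Hz. exists (ki z). split; [exists z; auto|]. apply Ek2; auto.
Qed.

Lemma below_finite h : forall w, vertex_height d Sim w h ->
  exists L, forall u, vle d Sim u w -> In u L.
Proof.
  induction h as [h IHh] using (well_founded_induction Nat.lt_wf_0). intros w Hw.
  destruct (predecessors_finite w (ex_intro _ h Hw)) as [P HP].
  destruct (finite_union P (fun z u => simple_expansion d Sim z w /\ vle d Sim u z))
    as [L HL].
  { intros z _. destruct (classic (simple_expansion d Sim z w)) as [He|Hn].
    - pose proof He as [[c Hc] _].
      destruct (IHh c (expansion_raises_height z w c h He Hc Hw) z Hc) as [Lz HLz].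
      exists Lz. intros u [_ Hu]; auto.
    - exists []. intros u [He _]; contradiction. }
  exists (w :: L). intros u Hu.
  apply clos_rt1n_rt, clos_rt_rtn1 in Hu. destruct Hu as [|z w' Hzw Huz]; [now left|right].
  apply (HL z); auto. split; auto. apply clos_rt_rt1n, clos_rtn1_rt; auto.
Qed.

End Similarities.

Theorem proposition4p6 (X : Type) (d : X -> X -> R)
  (Sim : (X -> Prop) -> (X -> Prop) -> (X -> X) -> Prop) :
  ultrametric d -> seq_compact d -> inhabited X ->
  finite_similarity_structure d Sim ->
  finitely_many_ball_classes d Sim ->
  forall n : nat, K_le_locally_finite d Sim n.
Proof.
  intros UM SC _ FS FB n v [k [Hk Hkn]].
  destruct (below_finite d Sim UM FS SC FB k v Hk) as [Lo HLo].
  destruct (above_finite d Sim UM FS SC n v k Hk) as [Up HUp].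
  destruct (nodup_lists_finite (Lo ++ Up)) as [LL HLL].
  exists LL. intros s [_ [Hh Hc]] Hv.
  assert (Hvx : forall x, In x s -> is_vertex d Sim x)
    by (intros x Hx; destruct (Hh x Hx) as [h [Hx' _]]; exists h; auto).
  apply HLL; [apply (chain_nodup d Sim UM FS SC); auto|].
  intros x Hx. apply in_or_app.
  destruct (chain_comparable d Sim UM FS SC s Hc Hvx x v Hx Hv) as [Hxv|Hvx'];
    [left; auto|right].
  destruct (Hh x Hx) as [b [Hb Hbn]]. apply (HUp x b); auto. lia.
Qed.
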